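(* The graphs $W^{k-1}_{k-i+1}= W(k-1,k-2,\dots,k-i+1)$ satisfy: (1) $W^{k-1}_{k-i+1}$ can be properly $(k-1)$-colored so that at most $i$ different colors appear at active vertices and so that among active vertices, only one vertex of our choosing gets the $i$th color. (2) In any $(k-1)$-coloring of $W^{k-1}_{k-i+1}$, at least $i$ different colors occur as the colors of active vertices. (3) If any edge from $W^{k-1}_{k-i+1}$ is removed, it can be properly $(k-1)$-colored so that at most $i-1$ colors occur at active vertices.
   Context: Fix $k\geq 4$ and a $(k-1)$-critical graph $M_{k-1}$ containing no triangles and no pentagons. Form $\bar M_{k-1}$ by adding, for each vertex $v$ of $M_{k-1}$, a new vertex $\bar v$ joined to every vertex of the neighborhood $\Gamma(v)\subseteq M_{k-1}$; the edges of $M_{k-1}$ are Type 1 edges, the newly added edges are Type 2 edges, and the new vertices $\bar v$ are the forward vertices (they form an independent set). For $2\leq r\leq k-1$, the graph $M^r_{k-1}\subseteq \bar M_{k-1}$ is obtained by removing Type 2 edges one by one (discarding any forward vertices isolated by this process) until no further Type 2 edge can be removed without the result admitting a $(k-1)$-coloring in which only $r-1$ colors appear at forward vertices. Denote by $F(M)$ the set of forward vertices of such a graph $M$. Given $r_1,\dots,r_t$, the graph $W(r_1,\dots,r_t)$ is the disjoint union of graphs $M^{r_i}_{k-1}$, $1\leq i\leq t$, together with an independent ''active set'' $A=\prod_i F(M^{r_i}_{k-1})$, where for each $i$ every forward vertex $\bar v\in F(M^{r_i}_{k-1})$ is joined to all vertices $u\in A$ whose $i$th coordinate equals $\bar v$.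 Set $W^{k-1}_{k-i+1}= W(k-1,k-2,\dots,k-i+1)$ (for $i=1$ this is interpreted as a single active vertex). *)

From mathcomp Require Import all_boot.
Set Implicit Arguments. Unset Strict Implicit. Unset Printing Implicit Defensive.

Definition proper_col (T : finType) (E : rel T) (n : nat) (c : T -> 'I_n) : Prop :=
  forall x y, E x y -> c x != c y.

Definition colorable (T : finType) (E : rel T) (n : nat) : Prop :=
  exists c : T -> 'I_n, proper_col E c.

Definition simple_graph (V : finType) (e : rel V) : Prop :=
  symmetric e /\ irreflexive e.

Definition del_edge (T : finType) (E : rel T) (a b : T) : rel T :=
  fun x y => E x y && ~~ (((x == a) && (y == b)) || ((x == b) && (y == a))).

(* remove the vertex v (its incident edges; v itself is then isolated, which
   does not affect colorability) *)
Definition del_vertex (T : finType) (E : rel T) (v : T) : rel T :=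
  fun x y => [&& x != v, y != v & E x y].

Definition critical (V : finType) (e : rel V) (n : nat) : Prop :=
  [/\ ~ colorable e n.-1, colorable e n,
      (forall a b, e a b -> colorable (del_edge e a b) n.-1)
    & (forall v, colorable (del_vertex e v) n.-1)].

Definition triangle_free (V : finType) (e : rel V) : Prop :=
  forall x y z, ~~ [&& e x y, e y z & e z x].

Definition pentagon_free (V : finType) (e : rel V) : Prop :=
  forall x0 x1 x2 x3 x4 : V, uniq [:: x0; x1; x2; x3; x4] ->
    ~~ [&& e x0 x1, e x1 x2, e x2 x3, e x3 x4 & e x4 x0].

(* Vertices of \bar M : inl v = original vertex v, inr v = forward vertex \bar v.
   A subgraph of \bar M keeping all Type 1 edges is given by its set S of
   Type 2 edges, a pair (v,u) in S standing for the edge \bar v -- u. *)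
Definition Mbar_edge (V : finType) (e : rel V) (S : {set V * V}) : rel (V + V) :=
  fun x y => match x, y with
  | inl u, inl v => e u v
  | inr v, inl u => (v, u) \in S
  | inl u, inr v => (v, u) \in S
  | inr _, inr _ => false
  end.

(* all Type 2 edges: \bar v joined to every u in Gamma(v) *)
Definition type2_full (V : finType) (e : rel V) : {set V * V} :=
  [set p | e p.1 p.2].

(* forward vertices remaining (those not isolated) *)
Definition fwd (V : finType) (S : {set V * V}) : {set V} :=
  [set v | [exists u, (v, u) \in S]].

Definition fwd_colors (V : finType) (n : nat) (S : {set V * V}) (c : V + V -> 'I_n)
  : {set 'I_n} := [set c (inr v) | v in fwd S].

Definition admits (V : finType) (n r : nat) (e : rel V) (S : {set V * V}) : Prop :=
  exists c : V + V -> 'I_n, proper_col (Mbar_edge e S) c /\ #|fwd_colors S c| <= r.-1.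

Definition removal_step (V : finType) (n r : nat) (e : rel V) (S S' : {set V * V})
  : Prop := exists2 p, p \in S & S' = S :\ p /\ ~ admits n r e S'.

Inductive reachable (T : Type) (R : T -> T -> Prop) (x : T) : T -> Prop :=
  | reach_refl : reachable R x x
  | reach_step y z : reachable R x y -> R y z -> reachable R x z.

(* S is (the Type 2 edge set of) a possible outcome M^r_{n} of the process *)
Definition is_Mr (V : finType) (n r : nat) (e : rel V) (S : {set V * V}) : Prop :=
  reachable (removal_step n r e) (type2_full e) S /\
  forall S', ~ removal_step n r e S S'.

(* vertices: inl (j, x) = vertex x of the j-th copy (of \bar M restricted);
             inr f      = active vertex (f j = label of its j-th coordinate) *)
Definition WT (V : finType) (t : nat) : finType :=
  (('I_t * (V + V)) + {ffun 'I_t -> V})%type.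

Definition active (V : finType) (t : nat) (S : 'I_t -> {set V * V})
  : {set {ffun 'I_t -> V}} := [set f : {ffun 'I_t -> V} | [forall j, f j \in fwd (S j)]].

Definition W_edge (V : finType) (e : rel V) (t : nat) (S : 'I_t -> {set V * V})
  : rel (WT V t) :=
  fun (x y : (('I_t * (V + V)) + {ffun 'I_t -> V})%type) => match x, y with
  | inl (j, a), inl (j', b) => (j == j') && Mbar_edge e (S j) a b
  | inl (j, inr v), inr f => (f j == v) && (f \in active S)
  | inr f, inl (j, inr v) => (f j == v) && (f \in active S)
  | _, _ => false
  end.

Definition W_colors (V : finType) (t n : nat) (S : 'I_t -> {set V * V})
  (c : WT V t -> 'I_n) : {set 'I_n} := [set c (inr f) | f in active S].

(* Write n = k - 1 and t = i - 1. Copy j of W is M^(n-j): every proper colouring of it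
   uses at least n - j forward colours, whereas deleting an edge at a forward vertex \bar a
   and recolouring \bar a like a gives a colouring in which that colour appears at no other
   forward vertex; renaming colours, \bar a gets colour j and all other forward vertices get
   colours above j. Colouring every copy this way for one active vertex a, the vertex a sees
   only colours 0..t-1 and takes the new colour t, while any other active f differs from a
   in some coordinate j0, so it sees colours >= j in copy j and > j0 in copy j0, and a
   pigeonhole argument leaves a colour below t free for it; this is (1). Deleting an edge of
   W frees a colour in the same way, which gives (3). For (2), the active vertices agreeing
   with a fixed one from coordinate m on use more than m colours, by induction on m. *)

From mathcomp Require Import all_boot zify.
From Stdlib Require Import Classical_Prop IndefiniteDescription.
Set Implicit Arguments. Unset Strict Implicit. Unset Printing Implicit Defensive.

Lemma card_ord_bounded n (A : {set 'I_n}) b :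
  {in A, forall x : 'I_n, x < b} -> #|A| <= b.
Proof.
move=> Ab; rewrite cardE -(size_map val) -(size_iota 0 b).
apply: uniq_leq_size => [|_ /mapP [x xA ->]].
  by rewrite (map_inj_uniq val_inj) enum_uniq.
by rewrite mem_iota /= Ab // -mem_enum.
Qed.

(* The values [<= j0] of [D] can only be taken at the [j0] indices below [j0]. *)
Lemma avoided_color_exists m n (D : 'I_m -> 'I_n) (j0 : 'I_m) :
  (forall j : 'I_m, j <= D j) -> j0 < D j0 ->
  [exists x : 'I_n, (x <= j0) && [forall j, D j != x]].
Proof.
move=> D_ge D_j0; apply: contraT => /existsPn none.
pose hit := [seq val (D j) | j <- enum [set j : 'I_m | j < j0]].
have hit_small : size hit <= j0.
  by rewrite size_map -cardE; apply: card_ord_bounded => j; rewrite inE.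
have : {subset iota 0 j0.+1 <= hit}.
  move=> x; rewrite mem_iota add0n /= => x_le.
  have x_lt : x < n by move: (ltn_ord (D j0)); lia.
  have := none (Ordinal x_lt); rewrite /= -ltnS x_le /= => /forallPn [j /negPn /eqP Dj].
  apply/mapP; exists j; last by rewrite Dj.
  rewrite mem_enum inE ltn_neqAle (leq_trans (D_ge j)) ?Dj // andbT.
  by apply: contraTneq D_j0 => /val_inj j_eq; subst j; rewrite Dj -leqNgt -ltnS.
by move/(uniq_leq_size (iota_uniq 0 j0.+1)); rewrite size_iota ltnNge hit_small.
Qed.

Definition free_color m n (D : 'I_m -> 'I_n) (x0 : 'I_n) : 'I_n :=
  odflt x0 [pick x : 'I_n | (x < m) && [forall j, D j != x]].

Lemma free_colorP m n (D : 'I_m -> 'I_n) x0 (j0 : 'I_m) :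
  (forall j : 'I_m, j <= D j) -> j0 < D j0 ->
  free_color D x0 < m /\ forall j, D j != free_color D x0.
Proof.
move=> D_ge D_j0; rewrite /free_color; case: pickP => [x /andP [xm /forallP] //|none].
have /existsP [x /andP [x_le avoid]] := avoided_color_exists D_ge D_j0.
by move: (none x); rewrite avoid andbT; move: (ltn_ord j0); lia.
Qed.

(* [s x] is the position of [x] in the list made of [j] colours outside [y |: X], then [y],
   then the remaining colours outside [y |: X], then [X]. *)
Lemma exists_relabeling n (X : {set 'I_n}) (y : 'I_n) j :
  y \notin X -> #|X| + j < n ->
  exists2 s : 'I_n -> 'I_n, injective s & val (s y) = j /\ {in X, forall x, j < s x}.
Proof.
move=> yX X_small.
set L := enum (~: (y |: X)).
set order := take j L ++ y :: drop j L ++ enum X.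
have size_L : size L = n - #|X|.+1.
  by rewrite /L -cardE cardsCs setCK cardsU1 yX card_ord.
have j_le : j <= size L by rewrite size_L; lia.
have size_order : size order = n.
  by rewrite size_cat /= size_cat size_takel // size_drop size_L -(cardE X); lia.
have order_all x : x \in order.
  rewrite mem_cat in_cons mem_cat mem_enum.
  have [-> | x_ne_y] := eqVneq x y; first by rewrite orbT.
  have [xX | xX] := boolP (x \in X); first by rewrite !orbT.
  have : x \in take j L ++ drop j L by rewrite cat_take_drop mem_enum !inE negb_or x_ne_y.
  by rewrite mem_cat => /orP [-> | ->]; rewrite ?orbT.
have y_notin_take : y \notin take j L.
  by apply: contraTN isT => /mem_take; rewrite mem_enum !inE eqxx.
have index_lt x : index x order < n by rewrite -{2}size_order index_mem.
exists (fun x => Ordinal (index_lt x)).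
  by move=> x1 x2 [] /(congr1 (nth y order)); rewrite !nth_index.
split; first by rewrite /= index_cat (negbTE y_notin_take) /= eqxx size_takel ?addn0.
move=> x xX /=; rewrite index_cat.
have -> : (x \in take j L) = false.
  by apply/negP => /mem_take; rewrite mem_enum !inE xX orbT.
have y_ne_x : y != x by apply: contraNneq yX => ->.
by rewrite size_takel //= (negbTE y_ne_x) addnS ltnS leq_addr.
Qed.

Definition avoids_pair (T : eqType) (a b : T) : rel T :=
  fun x y => ~~ (((x == a) && (y == b)) || ((x == b) && (y == a))).

Lemma avoids_pair_sym (T : eqType) (a b : T) : symmetric (avoids_pair a b).
Proof. by move=> x y; rewrite /avoids_pair orbC andbC [(y == b) && _]andbC. Qed.

Lemma del_edgeE (T : finType) (E : rel T) a b x y :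
  del_edge E a b x y = E x y && avoids_pair a b x y.
Proof. by []. Qed.

Lemma del_edgeC (T : finType) (E : rel T) a b : del_edge E a b =2 del_edge E b a.
Proof. by move=> x y; rewrite /del_edge orbC. Qed.

Section Mbar.

Variables (V : finType) (e : rel V).

Lemma fwdP (S : {set V * V}) v : reflect (exists u, (v, u) \in S) (v \in fwd S).
Proof. by rewrite inE; apply: existsP. Qed.

Definition marked_coloring n j (S : {set V * V}) a (d : V + V -> 'I_n) :=
  [/\ proper_col (Mbar_edge e S) d, val (d (inr a)) = j
    & forall v, v \in fwd S -> v != a -> j < d (inr v)].

Lemma Mbar_proper n (S : {set V * V}) (d : V + V -> 'I_n) :
  (forall u w, e u w -> d (inl u) != d (inl w)) ->
  (forall v w, (v, w) \in S -> d (inr v) != d (inl w)) ->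
  proper_col (Mbar_edge e S) d.
Proof.
move=> type1 type2 [u|v] [w|w] //=; [exact: type1 | | exact: type2].
by rewrite eq_sym; apply: type2.
Qed.

(* If some colour [al] is missing at the forward vertices, recolouring every
   vertex of colour [al] with the colour of its forward copy yields an
   [(n-1)]-colouring of [e]. *)
Lemma full_Mbar_not_admits n r :
  1 < n -> symmetric e -> ~ colorable e n.-1 -> r <= n ->
  ~ admits n r e (type2_full e).
Proof.
move=> n_gt1 e_sym e_ncol r_le [c [c_proper c_fwd]].
set F := fwd_colors _ c in c_fwd.
have /card_gt0P [al] : 0 < #|~: F| by move: (cardsC F); rewrite card_ord; lia.
rewrite inE => alF.
have type2 u w : e u w -> c (inr u) != c (inl w).
  by move=> uw; apply: (c_proper (inr u) (inl w)); rewrite /= inE.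
pose c0 v := if c (inl v) == al then c (inr v) else c (inl v).
have c0_ne_al u w : e u w -> c0 u != al.
  move=> uw; rewrite /c0; case: (c (inl u) =P al) => [_ | /eqP //].
  by apply: contraNneq alF => <-; apply: imset_f; apply/fwdP; exists w; rewrite inE.
have c0_proper u w : e u w -> c0 u != c0 w.
  move=> uw; have cuw := c_proper (inl u) (inl w) uw; rewrite /c0.
  case: (c (inl u) =P al) => [cu | _]; case: (c (inl w) =P al) => [cw | _] //.
  - by rewrite cu cw eqxx in cuw.
  - exact: type2.
  - by rewrite eq_sym; apply: type2; rewrite e_sym.
have n1_gt0 : 0 < n.-1 by lia.
apply: e_ncol; exists (fun v => odflt (Ordinal n1_gt0) (unlift al (c0 v))) => u w uw.
have lift_c0 v x : e v x -> lift al (odflt (Ordinal n1_gt0) (unlift al (c0 v))) = c0 v.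
  move=> vx; have al_ne : al != c0 v by rewrite eq_sym (c0_ne_al v x vx).
  by have [j -> ->] := unlift_some al_ne.
apply: contraNneq (c0_proper u w uw) => same.
by rewrite -(lift_c0 u w uw) -(lift_c0 w u) ?same // e_sym.
Qed.

Lemma reachable_not_admits n r S :
  1 < n -> symmetric e -> ~ colorable e n.-1 -> r <= n ->
  reachable (removal_step n r e) (type2_full e) S -> ~ admits n r e S.
Proof.
move=> n_gt1 e_sym e_ncol r_le; case=> [|S' S'' _ [p _ [_ //]]].
exact: full_Mbar_not_admits.
Qed.

Lemma reachable_sub_type2 n r S :
  reachable (removal_step n r e) (type2_full e) S -> S \subset type2_full e.
Proof.
elim=> [|S' S'' _ sub [p _ [-> _]]]; first exact: subxx.
exact: subset_trans (subsetDl _ _) sub.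
Qed.

Lemma Mr_del_admits n r S p :
  (forall S', ~ removal_step n r e S S') -> p \in S -> admits n r e (S :\ p).
Proof. by move=> final pS; apply: NNPP => not_adm; apply: (final (S :\ p)); exists p. Qed.

Lemma not_admits_fwd_nonempty n r S :
  colorable e n -> ~ admits n r e S -> exists v, v \in fwd S.
Proof.
move=> [phi phi_proper] not_adm; apply: NNPP => fwd_empty; apply: not_adm.
have no_type2 v w : (v, w) \notin S.
  by apply/negP => vw; apply: fwd_empty; exists v; apply/fwdP; exists w.
exists (fun x => match x with inl v | inr v => phi v end); split.
  by apply: Mbar_proper => [u w /phi_proper // | v w]; rewrite (negbTE (no_type2 v w)).
rewrite /fwd_colors; suff -> : fwd S = set0 by rewrite imset0 cards0.
by apply/setP => v; rewrite in_set0; apply/negbTE/fwdP => [[w]]; rewrite (negbTE (no_type2 v w)).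
Qed.

Lemma del_edge_Mbar_type2 S v u :
  del_edge (Mbar_edge e S) (inr v) (inl u) =2 Mbar_edge e (S :\ (v, u)).
Proof.
move=> [x|x] [y|y] //=; rewrite /del_edge /= ?(inj_eq inl_inj) ?(inj_eq inr_inj).
- by rewrite -[inl y == _]/false andbF andbT.
- by rewrite !inE xpair_eqE andbC [(x == u) && _]andbC.
- by rewrite !inE xpair_eqE orbF andbC.
Qed.

Lemma Mbar_coloring_del_type1 n S u w :
  0 < n -> colorable (del_edge e u w) n.-1 ->
  exists d : V + V -> 'I_n, proper_col (del_edge (Mbar_edge e S) (inl u) (inl w)) d /\
    forall v, val (d (inr v)) = n.-1.
Proof.
move=> n_gt0 [psi psi_proper]; have top_lt : n.-1 < n by lia.
have widen_le : n.-1 <= n by lia.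
exists (fun x => match x with
  | inl x => widen_ord widen_le (psi x) | inr _ => Ordinal top_lt end); split=> //.
move=> [x|x] [y|y] /andP [] //= xy nd.
- apply: contra (psi_proper x y _) => [/eqP [/val_inj ->] //|].
  by rewrite /del_edge xy.
- by apply/eqP => /(congr1 val) /= top; move: (ltn_ord (psi x)); lia.
- by apply/eqP => /(congr1 val) /= top; move: (ltn_ord (psi y)); lia.
Qed.

(* Forward vertices isolated in [Mbar_edge e S] may take any colour; the top
   colour keeps them above [j]. *)
Lemma Mbar_coloring_above n j S (c : V + V -> 'I_n) :
  j.+1 < n -> proper_col (Mbar_edge e S) c -> #|fwd_colors S c| <= (n - j).-1 ->
  exists d : V + V -> 'I_n, proper_col (Mbar_edge e S) d /\ forall v, j < d (inr v).
Proof.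
move=> j_lt c_proper c_fwd; set X := fwd_colors S c in c_fwd.
have small : #|X| + j < n by move: c_fwd j_lt; move: #|X| => x; lia.
have /card_gt0P [y] : 0 < #|~: X| by move: (cardsC X); rewrite card_ord; lia.
rewrite inE => yX; have [s s_inj [_ s_above]] := exists_relabeling yX small.
have top_lt : n.-1 < n by lia.
pose d x := match x with
  | inl w => s (c (inl w))
  | inr v => if v \in fwd S then s (c (inr v)) else Ordinal top_lt end.
exists d; split=> [|v].
  apply: Mbar_proper => [u w uw | v w vw]; rewrite /d.
    by rewrite (inj_eq s_inj); apply: (c_proper (inl u) (inl w)).
  have -> : v \in fwd S by apply/fwdP; exists w.
  by rewrite (inj_eq s_inj); apply: (c_proper (inr v) (inl w)).
rewrite /d; case: ifP => [vS | _]; last by rewrite /=; lia.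
by apply: s_above; apply: imset_f.
Qed.

End Mbar.

Section Copy.

Variables (V : finType) (e : rel V) (n j : nat) (S : {set V * V}).
Hypothesis S_not_admits : ~ admits n (n - j) e S.
Hypothesis S_min : forall p, p \in S -> admits n (n - j) e (S :\ p).
Hypothesis S_sub : S \subset type2_full e.

Lemma type2_edge v w : (v, w) \in S -> e v w.
Proof. by move/(subsetP S_sub); rewrite inE. Qed.

Lemma copy_coloring_marked a :
  j < n -> a \in fwd S -> exists d : V + V -> 'I_n, marked_coloring e j S a d.
Proof.
move=> j_lt /fwdP [u au]; have [c [c_proper c_fwd]] := S_min au.
pose c' x := if x == inr a then c (inl a) else c x.
have c'_proper : proper_col (Mbar_edge e S) c'.
  apply: Mbar_proper => [x y xy | v w vw]; first exact: (c_proper (inl x) (inl y)).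
  rewrite /c' (inj_eq inr_inj); have [<- | v_ne_a] := eqVneq v a.
    by apply: (c_proper (inl v) (inl w)); apply: type2_edge.
  apply: (c_proper (inr v) (inl w)); rewrite /= !inE vw andbT xpair_eqE.
  by rewrite (negbTE v_ne_a).
set X := [set c' (inr v) | v in fwd S :\ a].
have X_sub : X \subset fwd_colors (S :\ (a, u)) c.
  apply/subsetP => _ /imsetP [v /setD1P [v_ne_a /fwdP [w vw]] ->].
  rewrite /c' (inj_eq inr_inj) (negbTE v_ne_a); apply: imset_f; apply/fwdP.
  by exists w; rewrite !inE vw andbT xpair_eqE (negbTE v_ne_a).
have X_small : #|X| <= (n - j).-1 := leq_trans (subset_leq_card X_sub) c_fwd.
have aX : c (inl a) \notin X.
  apply/negP => aX; apply: S_not_admits; exists c'; split=> //.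
  apply: leq_trans X_small; apply: subset_leq_card; apply/subsetP => _ /imsetP [v vS ->].
  have [-> | v_ne_a] := eqVneq v a; first by rewrite /c' eqxx.
  by apply: imset_f; apply/setD1P.
have X_room : #|X| + j < n by move: X_small j_lt; move: #|X| => x; lia.
have [s s_inj [s_a s_above]] := exists_relabeling aX X_room.
exists (s \o c'); split=> [x y /c'_proper | | v vS v_ne_a] /=.
- by rewrite (inj_eq s_inj).
- by rewrite /c' eqxx.
- by apply: s_above; apply: imset_f; apply/setD1P.
Qed.

Lemma copy_coloring_del a b :
  (forall u w, e u w -> colorable (del_edge e u w) n.-1) -> j.+1 < n ->
  Mbar_edge e S a b ->
  exists d : V + V -> 'I_n,
    proper_col (del_edge (Mbar_edge e S) a b) d /\ forall v, j < d (inr v).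
Proof.
move=> e_del j_lt.
have type2_case v u : (v, u) \in S -> exists d : V + V -> 'I_n,
    proper_col (del_edge (Mbar_edge e S) (inr v) (inl u)) d /\ forall v, j < d (inr v).
  move=> vu; have [c [c_proper c_fwd]] := S_min vu.
  have [d [d_proper d_above]] := Mbar_coloring_above j_lt c_proper c_fwd.
  by exists d; split=> // x y; rewrite del_edge_Mbar_type2; apply: d_proper.
case: a b => [u|v] [w|w] //= ab.
- have n_gt0 : 0 < n by clear -j_lt; lia.
  have [d [d_proper d_top]] := Mbar_coloring_del_type1 S n_gt0 (e_del u w ab).
  by exists d; split=> // v; rewrite d_top; clear -j_lt; lia.
- have [d [d_proper d_above]] := type2_case w u ab.
  by exists d; split=> // x y; rewrite del_edgeC; apply: d_proper.
- exact: type2_case.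
Qed.

End Copy.

Section W.

Variables (V : finType) (e : rel V) (n t : nat) (S : 'I_t -> {set V * V}).

Definition W_col (dd : 'I_t -> V + V -> 'I_n) (h : {ffun 'I_t -> V} -> 'I_n) : WT V t -> 'I_n :=
  fun x : (('I_t * (V + V)) + {ffun 'I_t -> V})%type =>
    match x with inl (j, z) => dd j z | inr f => h f end.

Lemma activeP (f : {ffun 'I_t -> V}) :
  reflect (forall j, f j \in fwd (S j)) (f \in active S).
Proof. by rewrite inE; apply: forallP. Qed.

Lemma W_edge_cases (x y : WT V t) :
  W_edge e S x y ->
  [\/ exists j a b, [/\ x = inl (j, a), y = inl (j, b) & Mbar_edge e (S j) a b],
      exists j (f : {ffun 'I_t -> V}), [/\ x = inl (j, inr (f j)), y = inr f & f \in active S]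
    | exists j (f : {ffun 'I_t -> V}), [/\ x = inr f, y = inl (j, inr (f j)) & f \in active S]].
Proof.
case: x => [[j a] | f]; case: y => [[j' b] | g] //=.
- by case: a => [u|v] /andP [/eqP <- ab]; apply: Or31; do 3 eexists.
- by case: a => // v /andP [/eqP <- gA]; apply: Or32; exists j, g.
- by case: b => // v /andP [/eqP <- fA]; apply: Or33; exists j', f.
Qed.

Lemma W_col_proper_on (P : rel (WT V t)) dd h :
  symmetric P ->
  (forall j a b, Mbar_edge e (S j) a b -> P (inl (j, a)) (inl (j, b)) -> dd j a != dd j b) ->
  (forall f j, f \in active S -> P (inl (j, inr (f j))) (inr f) -> dd j (inr (f j)) != h f) ->
  forall x y, W_edge e S x y -> P x y -> W_col dd h x != W_col dd h y.
Proof.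
move=> P_sym copy_ok link_ok x y.
case/W_edge_cases => [[j [a [b [-> -> ab]]]] | [j [f [-> -> fA]]] | [j [f [-> -> fA]]]].
- exact: copy_ok.
- exact: link_ok.
- by rewrite P_sym eq_sym; apply: link_ok.
Qed.

Lemma W_colors_le dd (h : {ffun 'I_t -> V} -> 'I_n) b :
  (forall f, f \in active S -> h f < b) -> #|W_colors S (W_col dd h)| <= b.
Proof. by move=> h_lt; apply: card_ord_bounded => _ /imsetP [f fA ->]; apply: h_lt. Qed.

Lemma W_copy_proper (C : WT V t -> 'I_n) j :
  proper_col (W_edge e S) C -> proper_col (Mbar_edge e (S j)) (fun z => C (inl (j, z))).
Proof. by move=> C_proper a b ab; apply: C_proper; case: a ab => [u|v] ab; rewrite /= eqxx. Qed.

Hypothesis S_not_admits : forall j : 'I_t, ~ admits n (n - j) e (S j).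

Section LowerBound.

Variable C : WT V t -> 'I_n.
Hypothesis C_proper : proper_col (W_edge e S) C.

Definition active_agreeing_from m (g : {ffun 'I_t -> V}) : {set {ffun 'I_t -> V}} :=
  [set f in active S | [forall j : 'I_t, (m <= j) ==> (f j == g j)]].

Definition agreeing_colors m g := [set C (inr f) | f in active_agreeing_from m g].

(* If the active vertices agreeing with [g] from coordinate [m + 1] on used
   only [m + 1] colours, then by induction each class obtained by also fixing
   coordinate [m] would use all of them, so no forward vertex of copy [m]
   could use any of them: copy [m] would admit a colouring with too few
   forward colours. *)
Lemma agreeing_colors_step m (m_lt : m < t) g :
  g \in active S -> (forall g', g' \in active S -> m < #|agreeing_colors m g'|) ->
  m.+1 < #|agreeing_colors m.+1 g|.
Proof.
move=> gA IH; set U := agreeing_colors m.+1 g; rewrite ltnNge; apply/negP => U_small.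
pose J : 'I_t := Ordinal m_lt.
pose gv v := [ffun j => if j == J then v else g j].
have gvA v : v \in fwd (S J) -> gv v \in active S.
  move=> vS; apply/activeP => j; rewrite ffunE.
  by case: eqP => [-> // | _]; move/activeP: gA.
have agreeing_sub v : active_agreeing_from m (gv v) \subset active_agreeing_from m.+1 g.
  apply/subsetP => f; rewrite !inE => /andP [-> /forallP f_agree] /=.
  apply/forallP => j; apply/implyP => m_lt_j; move/implyP: (f_agree j); rewrite ffunE.
  by rewrite -(inj_eq val_inj) /= gtn_eqF //; apply; apply: ltnW.
have U_large : m < #|U|.
  apply: leq_trans (IH g gA) (subset_leq_card (imsetS _ _)); apply/subsetP => f.
  rewrite !inE => /andP [-> /forallP f_agree] /=; apply/forallP => j.
  by apply/implyP => lt_j; apply: (implyP (f_agree j)); apply: ltnW.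
have colors_gv v : v \in fwd (S J) -> agreeing_colors m (gv v) = U.
  move=> vS; apply/eqP; rewrite eqEcard imsetS ?agreeing_sub //=.
  exact: leq_trans U_small (IH _ (gvA v vS)).
have fwd_sub : fwd_colors (S J) (fun z => C (inl (J, z))) \subset ~: U.
  apply/subsetP => _ /imsetP [v vS ->]; rewrite inE -(colors_gv v vS).
  apply/imsetP => [[f]]; rewrite inE => /andP [fA /forallP f_agree] same.
  have fJ : f J == v by move/implyP: (f_agree J); rewrite ffunE eqxx; apply.
  have := @C_proper (inl (J, inr v)) (inr f); rewrite /= fJ fA same eqxx.
  by move/(_ isT).
case: (@S_not_admits J); exists (fun z => C (inl (J, z))); split; first exact: W_copy_proper.
apply: leq_trans (subset_leq_card fwd_sub) _.
move: (cardsC U) U_large; rewrite card_ord.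
by move: #|U| #|~: U| => a b; rewrite /J /=; lia.
Qed.

Lemma agreeing_colors_lower_bound m :
  m <= t -> forall g, g \in active S -> m < #|agreeing_colors m g|.
Proof.
elim: m => [_ g gA | m IH m_lt g gA].
  apply/card_gt0P; exists (C (inr g)); apply: imset_f.
  by rewrite inE gA; apply/forallP => j; rewrite eqxx implybT.
exact: agreeing_colors_step (IH (ltnW m_lt)).
Qed.

Lemma W_colors_lower_bound g : g \in active S -> t < #|W_colors S C|.
Proof.
move=> gA; have all_agree : active_agreeing_from t g = active S.
  apply/setP => f; rewrite inE; apply: andb_idr => _.
  by apply/forallP => j; rewrite leqNgt ltn_ord.
by have := agreeing_colors_lower_bound (leqnn t) gA; rewrite /agreeing_colors all_agree.
Qed.

End LowerBound.

Section UpperBounds.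

Hypothesis S_min : forall (j : 'I_t) p, p \in S j -> admits n (n - j) e (S j :\ p).
Hypothesis S_sub : forall j, S j \subset type2_full e.
Hypothesis e_col : colorable e n.
Hypothesis t_lt : t < n.

Let new_color : 'I_n := Ordinal t_lt.

Lemma active_nonempty : exists g, g \in active S.
Proof.
have fwd_S j : exists v, v \in fwd (S j).
  exact: not_admits_fwd_nonempty e_col (@S_not_admits j).
by exists [ffun j => xchoose (fwd_S j)]; apply/activeP => j; rewrite ffunE; apply: xchooseP.
Qed.

Definition marked_at (a : {ffun 'I_t -> V}) (dd : 'I_t -> V + V -> 'I_n) :=
  forall j : 'I_t, marked_coloring e j (S j) (a j) (dd j).

Lemma marked_exists a : a \in active S -> exists dd, marked_at a dd.
Proof.
move=> /activeP aA.
suff marked_copies :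
    forall j : 'I_t, exists d : V + V -> 'I_n, marked_coloring e j (S j) (a j) d.
  by have [dd dd_marked] := functional_choice _ marked_copies; exists dd.
move=> j; have j_lt : j < n by move: (ltn_ord j) t_lt; lia.
exact: copy_coloring_marked (@S_not_admits j) (@S_min j) (S_sub j) _ j_lt (aA j).
Qed.

Lemma marked_ge a dd f (j : 'I_t) :
  marked_at a dd -> f \in active S -> j <= dd j (inr (f j)).
Proof.
move=> /(_ j) [_ dd_a dd_above] fA.
have [-> | f_ne_a] := eqVneq (f j) (a j); first by rewrite dd_a.
by apply: ltnW; apply: dd_above f_ne_a; move/activeP: fA.
Qed.

Definition free_active_color (dd : 'I_t -> V + V -> 'I_n) (f : {ffun 'I_t -> V}) :=
  free_color (fun j => dd j (inr (f j))) new_color.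

Lemma free_active_colorP (dd : 'I_t -> V + V -> 'I_n) (f : {ffun 'I_t -> V}) (j0 : 'I_t) :
  (forall j : 'I_t, j <= dd j (inr (f j))) -> j0 < dd j0 (inr (f j0)) ->
  free_active_color dd f < t /\ forall j, dd j (inr (f j)) != free_active_color dd f.
Proof. exact: free_colorP. Qed.

Lemma marked_free a dd f :
  marked_at a dd -> f \in active S -> f != a ->
  free_active_color dd f < t /\ forall j, dd j (inr (f j)) != free_active_color dd f.
Proof.
move=> marked fA f_ne_a.
have [j0 f_ne_a_j0] : exists j0, f j0 != a j0.
  apply/existsP; apply: contraNT f_ne_a => /existsPn same.
  by apply/eqP/ffunP => j; apply/eqP/negPn/same.
apply: (free_active_colorP (j0 := j0)) => [j | ]; first exact: marked_ge marked fA.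
by have [_ _ -> //] := marked j0; move/activeP: fA.
Qed.

Lemma W_coloring_marked a :
  a \in active S ->
  exists c : WT V t -> 'I_n, [/\ proper_col (W_edge e S) c, #|W_colors S c| <= t.+1
    & forall f, f \in active S -> f != a -> c (inr f) != c (inr a)].
Proof.
move=> aA; have [dd marked] := marked_exists aA.
pose h f := if f == a then new_color else free_active_color dd f.
exists (W_col dd h); split.
- move=> x y xy; apply: (W_col_proper_on (P := fun _ _ => true)) xy _ => //.
    by move=> j u w uw _; have [dd_proper _ _] := marked j; apply: dd_proper.
  move=> f j fA _; rewrite /h; have [-> | f_ne_a] := eqVneq f a.
    by have [_ dd_a _] := marked j; rewrite -(inj_eq val_inj) /= dd_a ltn_eqF.
  by have [_ ->] := marked_free marked fA f_ne_a.
- apply: W_colors_le => f fA; rewrite /h; case: eqP => [// | /eqP f_ne_a].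
  by have [free_lt _] := marked_free marked fA f_ne_a; apply: ltnW.
- move=> f fA f_ne_a; rewrite /= /h (negbTE f_ne_a) eqxx.
  by have [free_lt _] := marked_free marked fA f_ne_a; rewrite -(inj_eq val_inj) /= ltn_eqF.
Qed.

Lemma W_del_link_coloring (j0 : 'I_t) g :
  g \in active S ->
  exists c : WT V t -> 'I_n,
    proper_col (del_edge (W_edge e S) (inl (j0, inr (g j0))) (inr g)) c /\ #|W_colors S c| <= t.
Proof.
move=> gA; have [dd marked] := marked_exists gA.
have j0_lt : j0 < n by move: (ltn_ord j0) t_lt; lia.
pose h f := if f == g then Ordinal j0_lt else free_active_color dd f.
exists (W_col dd h); split.
- move=> x y; rewrite del_edgeE => /andP [xy not_del].
  apply: (W_col_proper_on (P := avoids_pair _ _)) xy not_del; first exact: avoids_pair_sym.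
  + by move=> j u w uw _; have [dd_proper _ _] := marked j; apply: dd_proper.
  move=> f j fA; rewrite /h; have [-> | f_ne_g] := eqVneq f g.
    have [_ dd_g _] := marked j; apply: contraNneq => /(congr1 val).
    by rewrite /= dd_g => /val_inj ->; rewrite !eqxx.
  by have [_ ->] := marked_free marked fA f_ne_g.
- apply: W_colors_le => f fA; rewrite /h; case: eqP => [_ | /eqP f_ne_g].
  by rewrite /=; exact: ltn_ord.
  by have [] := marked_free marked fA f_ne_g.
Qed.

Lemma W_del_copy_coloring (j0 : 'I_t) a b :
  (forall u w, e u w -> colorable (del_edge e u w) n.-1) -> Mbar_edge e (S j0) a b ->
  exists c : WT V t -> 'I_n,
    proper_col (del_edge (W_edge e S) (inl (j0, a)) (inl (j0, b))) c /\ #|W_colors S c| <= t.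
Proof.
move=> e_del ab; have [g gA] := active_nonempty; have [dd marked] := marked_exists gA.
have j0_lt : j0.+1 < n by move: (ltn_ord j0) t_lt; lia.
have [d [d_proper d_above]] := copy_coloring_del (@S_min j0) e_del j0_lt ab.
pose dd' j := if j == j0 then d else dd j.
have dd'_ge f : f \in active S -> forall j : 'I_t, j <= dd' j (inr (f j)).
  move=> fA j; rewrite /dd'; case: eqP => [-> | _]; first exact: ltnW.
  exact: marked_ge marked fA.
have dd'_j0 f : j0 < dd' j0 (inr (f j0)) by rewrite /dd' eqxx.
have free f := fun fA : f \in active S => free_active_colorP (dd'_ge f fA) (dd'_j0 f).
exists (W_col dd' (free_active_color dd')); split.
- move=> x y; rewrite del_edgeE => /andP [xy not_del].
  apply: (W_col_proper_on (P := avoids_pair _ _)) xy not_del; first exact: avoids_pair_sym.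
  + move=> j u w uw nd; rewrite /dd'; case: (j =P j0) => [j_eq | _].
      subst j; apply: d_proper; rewrite del_edgeE uw.
      by move: nd; rewrite /avoids_pair !(inj_eq inl_inj) !xpair_eqE !eqxx.
    by have [dd_proper _ _] := marked j; apply: dd_proper.
  by move=> f j fA _; have [_ ->] := free f fA.
- by apply: W_colors_le => f fA; have [] := free f fA.
Qed.

Lemma W_del_edge_coloring x y :
  (forall u w, e u w -> colorable (del_edge e u w) n.-1) -> W_edge e S x y ->
  exists c : WT V t -> 'I_n, proper_col (del_edge (W_edge e S) x y) c /\ #|W_colors S c| <= t.
Proof.
move=> e_del.
case/W_edge_cases => [[j [a [b [-> -> ab]]]] | [j [f [-> -> fA]]] | [j [f [-> -> fA]]]].
- exact: W_del_copy_coloring.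
- exact: W_del_link_coloring.
- have [c [c_proper c_small]] := W_del_link_coloring j fA.
  by exists c; split=> // u w; rewrite del_edgeC; apply: c_proper.
Qed.

End UpperBounds.

End W.

Theorem lemma4 (k : nat) (V : finType) (e : rel V) (i : nat)
    (S : 'I_i.-1 -> {set V * V}) :
  4 <= k -> simple_graph e -> critical e k.-1 ->
  triangle_free e -> pentagon_free e ->
  0 < i -> i <= k.-1 ->
  (forall j : 'I_i.-1, is_Mr k.-1 (k.-1 - j) e (S j)) ->
  [/\ (forall a, a \in active S ->
         exists c : WT V i.-1 -> 'I_k.-1,
           [/\ proper_col (W_edge e S) c, #|W_colors S c| <= i
             & forall f, f \in active S -> f != a -> c (inr f) != c (inr a)]),
      (forall c : WT V i.-1 -> 'I_k.-1, proper_col (W_edge e S) c ->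
         i <= #|W_colors S c|)
    & (forall x y, W_edge e S x y ->
         exists c : WT V i.-1 -> 'I_k.-1,
           proper_col (del_edge (W_edge e S) x y) c /\ #|W_colors S c| <= i.-1)].
Proof.
move=> k_ge4 [e_sym _] [e_ncol e_col e_del _] _ _ i_gt0 i_le S_Mr.
have n_gt1 : 1 < k.-1 by lia.
have t_lt : i.-1 < k.-1 by lia.
have S_not_admits (j : 'I_i.-1) : ~ admits k.-1 (k.-1 - j) e (S j).
  exact: reachable_not_admits n_gt1 e_sym e_ncol (leq_subr _ _) (S_Mr j).1.
have S_min (j : 'I_i.-1) p : p \in S j -> admits k.-1 (k.-1 - j) e (S j :\ p).
  exact: Mr_del_admits (S_Mr j).2.
have S_sub (j : 'I_i.-1) : S j \subset type2_full e := reachable_sub_type2 (S_Mr j).1.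
split.
- move=> a aA; have [c [c_proper c_small c_marked]] :=
    W_coloring_marked S_not_admits S_min S_sub t_lt aA.
  by exists c; rewrite (prednK i_gt0) in c_small.
- move=> C C_proper; have [g gA] := active_nonempty S_not_admits e_col.
  by have := W_colors_lower_bound S_not_admits C_proper gA; rewrite (prednK i_gt0).
- by move=> x y; apply: (W_del_edge_coloring S_not_admits S_min S_sub e_col t_lt e_del).
Qed.
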